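(* Let $\mathcal P$ be an uncertain point set in $\mathbb R^2$ with $\min_{x\in\mathbb R^2}\widehat{\mathrm{cost}}(x)>0$, let $\varepsilon\in(0,1]$, let $\varrho>0$, and let $T(\mathcal P)$ be the output of any run of the greedy covering procedure on $S(\mathcal P)$. Then $$|T(\mathcal P)|\le 3540\,|T^*(\mathcal P)|,$$ where $T^*(\mathcal P)$ is a minimum-cardinality set $T\subset\mathbb R^2$ that $\frac{\varepsilon}{2(1+\varepsilon)}$-covers $S(\mathcal P)$.
   Context: Each $P_i$ ($i=1,\dots,n$) has $k$ locations $p_{i,1},\dots,p_{i,k}\in\mathbb R^2$; $P_{\mathrm{all}}$ is the set of all locations and $CH(P_{\mathrm{all}})$ its convex hull. $\widehat{\mathrm{cost}}(x)=\frac1n\sum_i\min_j\|x-p_{i,j}\|$ (Euclidean norm). A point $a$ $\gamma$-covers a point $b$ if $\|a-b\|\le\gamma\,\widehat{\mathrm{cost}}(a)$; a set $A$ $\gamma$-covers a set $B$ if every $b\in B$ is $\gamma$-covered by some $a\in A$. $S(\mathcal P)=CH(P_{\mathrm{all}})\cap\{(\beta i,\beta j): i,j\in\mathbb Z\}$ with $\beta=\frac{\varepsilon}{2\sqrt2(1+\varepsilon)}\varrho$ (in the paper $\varrho$ is a positive lower bound on $\widehat{\mathrm{cost}}$). Greedy covering procedure: start with $S=S(\mathcal P)$ and $T=\emptyset$; while $S\ne\emptyset$, choose any $z\in S$, add $z$ to $T$, and remove from $S$ every $s$ that $z$ $\frac{\varepsilon}{2(1+\varepsilon)}$-covers; output $T$.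 *)

From Stdlib Require Import Reals Lra List.
Import ListNotations.
Open Scope R_scope.

Definition pt : Type := (R * R)%type.

Definition dist2 (a b : pt) : R :=
  sqrt ((fst a - fst b) ^ 2 + (snd a - snd b) ^ 2).

Definition sumR (m : nat) (f : nat -> R) : R :=
  fold_right Rplus 0 (map f (seq 0 m)).

(* min_{j<k} ||x - p_{i,j}||  (meaningful for k >= 1) *)
Definition min_dist (k : nat) (p : nat -> nat -> pt) (i : nat) (x : pt) : R :=
  fold_right Rmin (dist2 x (p i 0%nat)) (map (fun j => dist2 x (p i j)) (seq 0 k)).

Definition cost (n k : nat) (p : nat -> nat -> pt) (x : pt) : R :=
  / INR n * sumR n (fun i => min_dist k p i x).

(* q lies in the convex hull of P_all = { p i j | i < n, j < k } *)
Definition in_hull (n k : nat) (p : nat -> nat -> pt) (q : pt) : Prop :=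
  exists w : nat -> nat -> R,
    (forall i j, 0 <= w i j) /\
    sumR n (fun i => sumR k (fun j => w i j)) = 1 /\
    sumR n (fun i => sumR k (fun j => w i j * fst (p i j))) = fst q /\
    sumR n (fun i => sumR k (fun j => w i j * snd (p i j))) = snd q.

Definition covers (n k : nat) (p : nat -> nat -> pt) (gamma : R) (a b : pt) : Prop :=
  dist2 a b <= gamma * cost n k p a.

Definition beta (eps rho : R) : R := eps / (2 * sqrt 2 * (1 + eps)) * rho.

Definition gam (eps : R) : R := eps / (2 * (1 + eps)).

Definition S_grid (n k : nat) (p : nat -> nat -> pt) (eps rho : R) (s : pt) : Prop :=
  in_hull n k p s /\
  exists a b : Z, s = (beta eps rho * IZR a, beta eps rho * IZR b).

(* greedy_run cov S T : T is the output of some run of the greedy procedure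
   started with the (remaining) set S, where cov z s means "z covers s". *)
Inductive greedy_run (cov : pt -> pt -> Prop) : (pt -> Prop) -> list pt -> Prop :=
| greedy_done : forall S : pt -> Prop,
    (forall s, ~ S s) -> greedy_run cov S []
| greedy_step : forall (S : pt -> Prop) (z : pt) (T : list pt),
    S z ->
    greedy_run cov (fun s => S s /\ ~ cov z s) T ->
    greedy_run cov S (z :: T).

(* The greedy centres are pairwise non-covering: if a precedes b then
   ||a - b|| > g cost(a), with g = eps / (2 (1 + eps)) <= 1/4.  Every greedy centre
   lies in a ball B(t, g cost(t)) around a centre t of the optimal cover, and since
   cost is 1-Lipschitz such a ball contains at most 36 pairwise separated points
   (one per cell of a 6 x 6 grid).  Hence |T| <= 36 |T*|. *)

From Stdlib Require Import Reals List Lra Lia ZArith.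
Import ListNotations.
Open Scope R_scope.

Lemma dist2_ge0 a b : 0 <= dist2 a b.
Proof. apply sqrt_pos. Qed.

Lemma dist2_sym a b : dist2 a b = dist2 b a.
Proof. unfold dist2; f_equal; ring. Qed.

Lemma dist2_sqr a b : dist2 a b ^ 2 = (fst a - fst b) ^ 2 + (snd a - snd b) ^ 2.
Proof.
  apply pow2_sqrt.
  pose proof (pow2_ge_0 (fst a - fst b)); pose proof (pow2_ge_0 (snd a - snd b)); lra.
Qed.

Lemma dist2_triangle a b c : dist2 a b <= dist2 a c + dist2 c b.
Proof.
  assert (E : forall x y, dist2 x y = Rgeom.dist_euc (fst x) (snd x) (fst y) (snd y)).
  { intros; unfold dist2, Rgeom.dist_euc, Rsqr; f_equal; ring. }
  rewrite !E; apply Rgeom.triangle.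
Qed.

Lemma Rabs_fst_le_dist2 a b : Rabs (fst a - fst b) <= dist2 a b.
Proof.
  rewrite <- sqrt_Rsqr_abs; apply sqrt_le_1_alt; unfold Rsqr.
  pose proof (pow2_ge_0 (snd a - snd b)); lra.
Qed.

Lemma Rabs_snd_le_dist2 a b : Rabs (snd a - snd b) <= dist2 a b.
Proof.
  rewrite <- sqrt_Rsqr_abs; apply sqrt_le_1_alt; unfold Rsqr.
  pose proof (pow2_ge_0 (fst a - fst b)); lra.
Qed.

Lemma dist2_lt_of_Rabs_coords a b h :
  Rabs (fst a - fst b) < h -> Rabs (snd a - snd b) < h -> dist2 a b < 2 * h.
Proof.
  intros Hx Hy.
  pose proof (dist2_sqr a b); pose proof (dist2_ge0 a b).
  pose proof (Rabs_pos (fst a - fst b)); pose proof (Rabs_pos (snd a - snd b)).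
  rewrite <- (pow2_abs (fst a - fst b)), <- (pow2_abs (snd a - snd b)) in H.
  nra.
Qed.

Lemma fold_Rmin_map_le (f g : nat -> R) d (l : list nat) :
  (forall j, f j <= g j + d) ->
  fold_right Rmin (f 0%nat) (map f l) <= fold_right Rmin (g 0%nat) (map g l) + d.
Proof.
  intro H; induction l as [|a l IH]; simpl; [apply H|].
  specialize (H a); revert IH.
  generalize (fold_right Rmin (f 0%nat) (map f l)) (fold_right Rmin (g 0%nat) (map g l)).
  intros X Y IH; unfold Rmin; destruct Rle_dec, Rle_dec; lra.
Qed.

Lemma fold_Rplus_map_le (f g : nat -> R) d (l : list nat) :
  (forall j, f j <= g j + d) ->
  fold_right Rplus 0 (map f l) <= fold_right Rplus 0 (map g l) + INR (length l) * d.
Proof.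
  intro H; induction l as [|a l IH]; cbn [map fold_right length]; [simpl; lra|].
  rewrite S_INR; specialize (H a); lra.
Qed.

Lemma min_dist_lipschitz k p i z t :
  min_dist k p i t <= min_dist k p i z + dist2 z t.
Proof.
  apply (fold_Rmin_map_le (fun j => dist2 t (p i j)) (fun j => dist2 z (p i j))); intro j.
  rewrite (dist2_sym z t), Rplus_comm; apply dist2_triangle.
Qed.

Lemma cost_lipschitz n k p z t : cost n k p t <= cost n k p z + dist2 z t.
Proof.
  unfold cost, sumR.
  assert (Hsum := fold_Rplus_map_le _ _ (dist2 z t) (seq 0 n)
                    (fun i => min_dist_lipschitz k p i z t)).
  rewrite length_seq in Hsum.
  pose proof (dist2_ge0 z t).
  destruct n as [|n]; [simpl; rewrite Rinv_0; lra|].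
  assert (Hn : 0 < INR (S n)) by (apply lt_0_INR; lia).
  apply Rmult_le_compat_l with (r := / INR (S n)) in Hsum;
    [|left; apply Rinv_0_lt_compat; lra].
  rewrite Rmult_plus_distr_l in Hsum.
  replace (/ INR (S n) * (INR (S n) * dist2 z t)) with (dist2 z t) in Hsum
    by (field; lra).
  lra.
Qed.

Lemma Zfloor_div_range x h : 0 < h -> Rabs x < 3 * h -> (-3 <= Zfloor (x / h) <= 2)%Z.
Proof.
  intros Hh Hx; apply Rabs_def2 in Hx.
  assert (Ex : x = x / h * h) by (field; lra).
  assert (Hq : -3 < x / h < 3) by (split; nra).
  destruct (Zfloor_bound (x / h)) as [Hlo Hhi].
  assert (Hl : (-4 < Zfloor (x / h))%Z) by (apply lt_IZR; lra).
  assert (Hu : (Zfloor (x / h) < 3)%Z) by (apply lt_IZR; lra).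
  lia.
Qed.

Lemma Rabs_lt_of_Zfloor_div_eq x y h :
  0 < h -> Zfloor (x / h) = Zfloor (y / h) -> Rabs (x - y) < h.
Proof.
  intros Hh E.
  destruct (Zfloor_bound (x / h)) as [Hx1 Hx2], (Zfloor_bound (y / h)) as [Hy1 Hy2].
  rewrite E in Hx1, Hx2.
  assert (Ex : x = x / h * h) by (field; lra).
  assert (Ey : y = y / h * h) by (field; lra).
  apply Rabs_def1; nra.
Qed.

Lemma ForallOrdPairs_impl_in {A} (R R' : A -> A -> Prop) l :
  (forall a b, In a l -> In b l -> R a b -> R' a b) ->
  ForallOrdPairs R l -> ForallOrdPairs R' l.
Proof.
  intros H HR; induction HR as [|a l Ha HR IH]; constructor.
  - rewrite Forall_forall in *; intros x Hx; apply H; simpl; auto.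
  - apply IH; intros x y Hx Hy; apply H; simpl; auto.
Qed.

Lemma ForallOrdPairs_map {A B} (f : A -> B) (R : B -> B -> Prop) l :
  ForallOrdPairs (fun a b => R (f a) (f b)) l -> ForallOrdPairs R (map f l).
Proof.
  intro HR; induction HR as [|a l Ha HR IH]; constructor; auto.
  now apply Forall_map.
Qed.

Lemma ForallOrdPairs_filter {A} (R : A -> A -> Prop) f l :
  ForallOrdPairs R l -> ForallOrdPairs R (filter f l).
Proof.
  intro HR; induction HR as [|a l Ha HR IH]; simpl; [constructor|].
  destruct (f a); auto; constructor; auto.
  apply Forall_forall; intros x Hx; apply filter_In in Hx.
  rewrite Forall_forall in Ha; apply Ha; tauto.
Qed.

Definition grid_cell (h : R) (t w : pt) : Z * Z :=
  (Zfloor ((fst w - fst t) / h), Zfloor ((snd w - snd t) / h)).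

Lemma grid_cell_window h t w :
  0 < h -> dist2 t w < 3 * h ->
  In (grid_cell h t w) (list_prod [-3; -2; -1; 0; 1; 2]%Z [-3; -2; -1; 0; 1; 2]%Z).
Proof.
  intros Hh Hw; rewrite dist2_sym in Hw.
  pose proof (Rabs_fst_le_dist2 w t); pose proof (Rabs_snd_le_dist2 w t).
  apply in_prod; simpl.
  - assert (H1 := Zfloor_div_range (fst w - fst t) h Hh ltac:(lra)); lia.
  - assert (H1 := Zfloor_div_range (snd w - snd t) h Hh ltac:(lra)); lia.
Qed.

Lemma dist2_lt_of_grid_cell_eq h t a b :
  0 < h -> grid_cell h t a = grid_cell h t b -> dist2 a b < 2 * h.
Proof.
  intros Hh E; injection E as Ex Ey.
  apply dist2_lt_of_Rabs_coords.
  - replace (fst a - fst b) with ((fst a - fst t) - (fst b - fst t)) by ring.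
    now apply Rabs_lt_of_Zfloor_div_eq.
  - replace (snd a - snd b) with ((snd a - snd t) - (snd b - snd t)) by ring.
    now apply Rabs_lt_of_Zfloor_div_eq.
Qed.

Lemma disc_packing_length_le t r h (L : list pt) :
  0 < h -> r < 3 * h ->
  (forall w, In w L -> dist2 t w <= r) ->
  ForallOrdPairs (fun a b => 2 * h <= dist2 a b) L ->
  (length L <= 36)%nat.
Proof.
  intros Hh Hr Hdisc Hsep.
  assert (Hnodup : NoDup (map (grid_cell h t) L)).
  { apply NoDup_iff_ForallOrdPairs, ForallOrdPairs_map.
    apply (ForallOrdPairs_impl_in (fun a b => 2 * h <= dist2 a b)); [|exact Hsep].
    intros a b _ _ Hab E; apply (dist2_lt_of_grid_cell_eq h t a b) in E; lra. }
  assert (Hincl : incl (map (grid_cell h t) L)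
                    (list_prod [-3; -2; -1; 0; 1; 2]%Z [-3; -2; -1; 0; 1; 2]%Z)).
  { intros c Hc; apply in_map_iff in Hc; destruct Hc as [w [<- Hw]].
    apply grid_cell_window; [exact Hh|]; specialize (Hdisc w Hw); lra. }
  pose proof (NoDup_incl_length Hnodup Hincl) as Hlen.
  now rewrite length_map, length_prod in Hlen.
Qed.

Section Separated.

Variable C : pt -> R.
Variable g : R.
Hypothesis C_pos : forall x, 0 < C x.
Hypothesis C_lipschitz : forall z t, C t <= C z + dist2 z t.
Hypothesis g_range : 0 < g <= 1/4.

Definition separated (a b : pt) : Prop := g * C a < dist2 a b.

(* Inside the ball B(t, g C(t)) the Lipschitz bound gives C >= (1 - g) C(t), so
   separated points are 2h apart for h = g (1 - g) C(t) / 2, while g C(t) < 3h. *)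
Lemma separated_in_ball_length_le t L :
  ForallOrdPairs separated L -> (forall w, In w L -> dist2 t w <= g * C t) ->
  (length L <= 36)%nat.
Proof.
  intros Hsep Hball.
  pose proof (C_pos t) as Ct.
  assert (Hg : 0 < g * (1 - g)) by nra.
  set (h := g * (1 - g) * C t / 2).
  assert (Hh : 0 < h) by (unfold h; nra).
  apply (disc_packing_length_le t (g * C t) h); auto.
  - assert (HgC : 0 < g * C t) by nra.
    assert (0 < g * C t * (1 - 3 * g)) by (apply Rmult_lt_0_compat; lra).
    unfold h; lra.
  - apply (ForallOrdPairs_impl_in separated); [|exact Hsep].
    intros a b Ha _ Hab; unfold separated in Hab.
    pose proof (C_lipschitz a t) as Hlip; rewrite dist2_sym in Hlip.
    pose proof (Hball a Ha).
    assert (Ha' : g * ((1 - g) * C t) <= g * C a) by (apply Rmult_le_compat_l; lra).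
    unfold h; lra.
Qed.

Lemma separated_covered_length_le (Tstar T : list pt) :
  ForallOrdPairs separated T ->
  (forall w, In w T -> exists t, In t Tstar /\ dist2 t w <= g * C t) ->
  (length T <= 36 * length Tstar)%nat.
Proof.
  revert T; induction Tstar as [|t Tstar IH]; intros T Hsep Hcov.
  - destruct T as [|w T]; [simpl; lia|].
    destruct (Hcov w (or_introl eq_refl)) as [x [[] _]].
  - set (near := fun w => if Rle_dec (dist2 t w) (g * C t) then true else false).
    rewrite <- (filter_length near T).
    assert (Hnear : (length (filter near T) <= 36)%nat).
    { apply (separated_in_ball_length_le t); [now apply ForallOrdPairs_filter|].
      intros w Hw; apply filter_In in Hw; destruct Hw as [_ Hw]; unfold near in Hw.
      destruct Rle_dec; [assumption|discriminate]. }
    assert (Hfar : (length (filter (fun w => negb (near w)) T) <= 36 * length Tstar)%nat).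
    { apply IH; [now apply ForallOrdPairs_filter|].
      intros w Hw; apply filter_In in Hw; destruct Hw as [Hw Hfar]; unfold near in Hfar.
      destruct (Hcov w Hw) as [t' [[<-|Ht'] Hd]]; [|eauto].
      destruct Rle_dec; simpl in Hfar; [discriminate|contradiction]. }
    simpl; lia.
Qed.

End Separated.

Lemma greedy_run_incl cov S T : greedy_run cov S T -> forall z, In z T -> S z.
Proof.
  intro H; induction H as [S _|S z T Hz _ IH]; intros w Hw; [destruct Hw|].
  destruct Hw as [<-|Hw]; [exact Hz|apply IH, Hw].
Qed.

Lemma greedy_run_not_covers cov S T :
  greedy_run cov S T -> ForallOrdPairs (fun a b => ~ cov a b) T.
Proof.
  intro H; induction H as [S _|S z T _ HT IH]; constructor; [|exact IH].
  apply Forall_forall; intros w Hw; apply (greedy_run_incl _ _ _ HT w Hw).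
Qed.

Lemma gam_range eps : 0 < eps <= 1 -> 0 < gam eps <= 1/4.
Proof.
  intro Heps; unfold gam; split.
  - apply Rdiv_lt_0_compat; lra.
  - apply Rmult_le_reg_r with (2 * (1 + eps)); [lra|].
    unfold Rdiv; rewrite Rmult_assoc, Rinv_l by lra; lra.
Qed.

Theorem mainTheorem12
  (n k : nat) (p : nat -> nat -> pt) (eps rho : R) (T : list pt) :
  (1 <= k)%nat ->
  (exists x0 : pt, (forall x : pt, cost n k p x0 <= cost n k p x) /\
                   0 < cost n k p x0) ->
  0 < eps <= 1 ->
  0 < rho ->
  greedy_run (covers n k p (gam eps)) (S_grid n k p eps rho) T ->
  forall Tstar : list pt,
    NoDup Tstar ->
    (forall s, S_grid n k p eps rho s ->
       exists t, In t Tstar /\ covers n k p (gam eps) t s) ->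
    (length T <= 3540 * length Tstar)%nat.
Proof.
  intros _ [x0 [Hmin Hpos]] Heps _ Hrun Tstar _ Hopt.
  assert (Hcost_pos : forall x, 0 < cost n k p x) by (intro x; specialize (Hmin x); lra).
  assert (Hsep : ForallOrdPairs (separated (cost n k p) (gam eps)) T).
  { apply (ForallOrdPairs_impl_in (fun a b => ~ covers n k p (gam eps) a b));
      [|exact (greedy_run_not_covers _ _ _ Hrun)].
    intros a b _ _ Hab; unfold separated, covers in *; lra. }
  assert (Hcov : forall w, In w T ->
            exists t, In t Tstar /\ dist2 t w <= gam eps * cost n k p t).
  { intros w Hw; exact (Hopt w (greedy_run_incl _ _ _ Hrun w Hw)). }
  pose proof (separated_covered_length_le _ _ Hcost_pos (cost_lipschitz n k p)
                (gam_range eps Heps) Tstar T Hsep Hcov).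
  lia.
Qed.
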